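(* Let $q>0$. Then the function $\mathcal{E}_q^z$ is analytic in the disc $|z|<R_q$, where $$R_q=\begin{cases}\dfrac{2}{1-q}, & 0<q<1,\\[1ex] \dfrac{2q}{q-1}, & q>1,\\[1ex] \infty, & q=1,\end{cases}$$ and for $|z|<R_q$ $$\mathcal{E}_q^z=\sum_{n=0}^\infty \frac{z^n}{\{n\}!},$$ where, for $q\neq1$, $\{n\}:=\dfrac{1+q+\dots+q^{n-1}}{\frac12(1+q^{n-1})}=\dfrac{2(1-q^n)}{(1-q)(1+q^{n-1})}$ (and $\{n\}:=n$ for $q=1$), and $\{n\}!:=\{1\}\{2\}\cdots\{n\}$, $\{0\}!:=1$.
   Context: For $q>0$ and integers $k\ge1$ let $[k]=1+q+\dots+q^{k-1}$, $[n]!=[1][2]\cdots[n]$, $[0]!=1$. The standard $q$-exponentials are $e_q^z=\sum_{n\ge0} z^n/[n]!$ and $E_q^z=\sum_{n\ge0} q^{n(n-1)/2}z^n/[n]!$, defined by these power series on their discs of convergence and extended meromorphically to $\mathbb{C}$; for $0<q<1$ one has $e_q^z=\prod_{k\ge0}(1-(1-q)q^kz)^{-1}$ and $E_q^z=\prod_{k\ge0}(1+(1-q)q^kz)$, and in general $E_q^z=e_{1/q}^z$; for $q=1$ both equal $e^z$. The improved $q$-exponential is $\mathcal{E}_q^z:=e_q^{z/2}E_q^{z/2}$ (a meromorphic function of $z$); for $0<q<1$, $\mathcal{E}_q^z=\prod_{k\ge0}\frac{1+q^k(1-q)\frac z2}{1-q^k(1-q)\frac z2}$. *)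

From Stdlib Require Import Reals Lra Lia.
Open Scope R_scope.

Definition Cx : Type := (R * R)%type.
Definition C0 : Cx := (0, 0).
Definition C1 : Cx := (1, 0).
Definition Cadd (z w : Cx) : Cx := (fst z + fst w, snd z + snd w).
Definition Copp (z : Cx) : Cx := (- fst z, - snd z).
Definition Csub (z w : Cx) : Cx := Cadd z (Copp w).
Definition Cmul (z w : Cx) : Cx :=
  (fst z * fst w - snd z * snd w, fst z * snd w + snd z * fst w).
Definition Cscal (r : R) (z : Cx) : Cx := (r * fst z, r * snd z).
Fixpoint Cpow (z : Cx) (n : nat) : Cx :=
  match n with O => C1 | S m => Cmul z (Cpow z m) end.
Definition Cnorm (z : Cx) : R := sqrt (fst z ^ 2 + snd z ^ 2).

Fixpoint Csum (f : nat -> Cx) (n : nat) : Cx :=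
  match n with O => C0 | S m => Cadd (Csum f m) (f m) end.

Definition Cseries (f : nat -> Cx) (l : Cx) : Prop :=
  forall eps : R, 0 < eps ->
    exists N : nat, forall n : nat, (N <= n)%nat -> Cnorm (Csub (Csum f n) l) < eps.

Fixpoint qint (q : R) (k : nat) : R :=
  match k with O => 0 | S m => qint q m + q ^ m end.

Fixpoint qfact (q : R) (n : nat) : R :=
  match n with O => 1 | S m => qfact q m * qint q (S m) end.

(* {n} = [n] / ((1 + q^(n-1))/2)   (equals n when q = 1) *)
Definition qbrace (q : R) (n : nat) : R :=
  qint q n / ((1 + q ^ (n - 1)) / 2).

Fixpoint qbfact (q : R) (n : nat) : R :=
  match n with O => 1 | S m => qbfact q m * qbrace q (S m) end.

Definition e_q_term (q : R) (w : Cx) (n : nat) : Cx :=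
  Cscal (/ qfact q n) (Cpow w n).
Definition E_q_term (q : R) (w : Cx) (n : nat) : Cx :=
  Cscal (q ^ (n * (n - 1) / 2) / qfact q n) (Cpow w n).
Definition Eimp_term (q : R) (z : Cx) (n : nat) : Cx :=
  Cscal (/ qbfact q n) (Cpow z n).

Definition in_disc (q r : R) : Prop :=
  if Rlt_dec q 1 then r < 2 / (1 - q)
  else if Rlt_dec 1 q then r < 2 * q / (q - 1)
  else True.

From Stdlib Require Import Reals Lra Lia.
From Coquelicot Require Import Coquelicot.
(* Imported after Coquelicot, so that [Cpow] and [Copp] denote the definitions of [Defs]. *)
From Pilot Require Import Defs.
Open Scope R_scope.

(* Both q-exponentials are absolutely convergent power series for [|w| < R_q / 2]: by the
   ratio test, since [1/[n+1]] tends to [1 - q] for [q < 1] and to [0] for [q >= 1], and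
   [E_q = e_(1/q)].  Hence the Cauchy product of the two series converges to the product of
   their sums.  Its n-th coefficient [c_n = sum_k q^(k(k-1)/2) / ([k]! [n-k]!)] satisfies
   [[n+1] c_(n+1) = (1 + q^n) c_n], obtained by splitting [[n+1] = [n+1-k] + q^(n+1-k) [k]]
   termwise, i.e. [{n+1} c_(n+1) = 2 c_n]; so [c_n = 2^n / {n}!], which is the claim. *)

Lemma Cx_eq (z w : Cx) : fst z = fst w -> snd z = snd w -> z = w.
Proof. destruct z, w; simpl; intros; subst; reflexivity. Qed.

Ltac Cx_ring := apply Cx_eq; simpl; ring.

Lemma Cnorm_ge_0 (z : Cx) : 0 <= Cnorm z.
Proof. apply sqrt_pos. Qed.

(* [Cx], [Cmul] and [Cnorm] are definitionally Coquelicot's [C], [Cmult] and [Cmod]. *)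
Lemma Cnorm_mul (z w : Cx) : Cnorm (Cmul z w) = Cnorm z * Cnorm w.
Proof. exact (Cmod_mult z w). Qed.

Lemma Cnorm_pow (z : Cx) (n : nat) : Cnorm (Cpow z n) = Cnorm z ^ n.
Proof.
  induction n as [|n IH]; simpl.
  - exact Cmod_1.
  - rewrite Cnorm_mul, IH; reflexivity.
Qed.

Lemma Cnorm_scal (r : R) (z : Cx) : Cnorm (Cscal r z) = Rabs r * Cnorm z.
Proof.
  unfold Cnorm, Cscal; simpl.
  rewrite <- sqrt_Rsqr_abs, <- sqrt_mult by (try apply Rle_0_sqr; nra).
  f_equal; unfold Rsqr; ring.
Qed.

Lemma Rabs_fst_le_Cnorm (z : Cx) : Rabs (fst z) <= Cnorm z.
Proof. exact (re_le_Cmod z). Qed.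

Lemma Rabs_snd_le_Cnorm (z : Cx) : Rabs (snd z) <= Cnorm z.
Proof.
  unfold Cnorm; rewrite <- sqrt_Rsqr_abs; apply sqrt_le_1_alt.
  unfold Rsqr; pose proof (pow2_ge_0 (fst z)); nra.
Qed.

Lemma Cnorm_le_Rabs_add (z : Cx) : Cnorm z <= Rabs (fst z) + Rabs (snd z).
Proof.
  pose proof (Rabs_pos (fst z)); pose proof (Rabs_pos (snd z)).
  unfold Cnorm; rewrite <- (sqrt_Rsqr (Rabs (fst z) + Rabs (snd z))) by lra.
  apply sqrt_le_1_alt; unfold Rsqr.
  pose proof (pow2_abs (fst z)); pose proof (pow2_abs (snd z)); nra.
Qed.

Lemma Cpow_add (w : Cx) (m n : nat) : Cpow w (m + n) = Cmul (Cpow w m) (Cpow w n).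
Proof. induction m as [|m IH]; simpl; [Cx_ring|rewrite IH; Cx_ring]. Qed.

Lemma Cpow_scal (r : R) (z : Cx) (n : nat) : Cpow (Cscal r z) n = Cscal (r ^ n) (Cpow z n).
Proof. induction n as [|n IH]; simpl; [Cx_ring|rewrite IH; Cx_ring]. Qed.

Lemma Csum_fst (f : nat -> Cx) (n : nat) :
  fst (Csum f (S n)) = sum_f_R0 (fun k => fst (f k)) n.
Proof. induction n as [|n IH]; simpl in *; [ring|rewrite IH; reflexivity]. Qed.

Lemma Csum_snd (f : nat -> Cx) (n : nat) :
  snd (Csum f (S n)) = sum_f_R0 (fun k => snd (f k)) n.
Proof. induction n as [|n IH]; simpl in *; [ring|rewrite IH; reflexivity]. Qed.

Lemma Csum_scal (c : nat -> R) (w : Cx) (n : nat) :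
  Csum (fun k => Cscal (c k) w) (S n) = Cscal (sum_f_R0 c n) w.
Proof.
  induction n as [|n IH].
  - Cx_ring.
  - change (Csum (fun k => Cscal (c k) w) (S (S n)))
      with (Cadd (Csum (fun k => Cscal (c k) w) (S n)) (Cscal (c (S n)) w)).
    rewrite IH; Cx_ring.
Qed.

Lemma Csum_ext (f g : nat -> Cx) (n : nat) :
  (forall k, (k < n)%nat -> f k = g k) -> Csum f n = Csum g n.
Proof.
  induction n as [|n IH]; intros Hfg; simpl; [reflexivity|].
  rewrite IH, Hfg by auto with arith; reflexivity.
Qed.

Lemma Cseries_of_components (f : nat -> Cx) (l : Cx) :
  is_series (fun n => fst (f n)) (fst l) -> is_series (fun n => snd (f n)) (snd l) ->
  Cseries f l.
Proof.
  intros Hfst Hsnd eps Heps.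
  apply is_series_Reals in Hfst, Hsnd.
  destruct (Hfst (eps / 2) ltac:(lra)) as [N1 HN1].
  destruct (Hsnd (eps / 2) ltac:(lra)) as [N2 HN2].
  exists (S (N1 + N2)); intros [|n] Hn; [lia|].
  specialize (HN1 n ltac:(lia)); specialize (HN2 n ltac:(lia)); unfold R_dist in *.
  rewrite <- Csum_fst in HN1; rewrite <- Csum_snd in HN2.
  eapply Rle_lt_trans; [apply Cnorm_le_Rabs_add|].
  change (Rabs (fst (Csum f (S n)) - fst l) + Rabs (snd (Csum f (S n)) - snd l) < eps).
  lra.
Qed.

Definition Cx_Series (f : nat -> Cx) : Cx :=
  (Series (fun n => fst (f n)), Series (fun n => snd (f n))).

Lemma ex_series_Rabs_of_Cnorm (g : Cx -> R) (f : nat -> Cx) :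
  (forall z, Rabs (g z) <= Cnorm z) ->
  ex_series (fun n => Cnorm (f n)) -> ex_series (fun n => Rabs (g (f n))).
Proof.
  intros Hg Hf; refine (ex_series_le (V := R_CompleteNormedModule) _ _ _ Hf).
  intro n; change (Rabs (Rabs (g (f n))) <= Cnorm (f n)).
  rewrite Rabs_Rabsolu; apply Hg.
Qed.

Lemma is_series_fst_Cx_Series (f : nat -> Cx) :
  ex_series (fun n => Cnorm (f n)) -> is_series (fun n => fst (f n)) (fst (Cx_Series f)).
Proof.
  intros Hf; apply Series_correct, ex_series_Rabs.
  exact (ex_series_Rabs_of_Cnorm fst f Rabs_fst_le_Cnorm Hf).
Qed.

Lemma is_series_snd_Cx_Series (f : nat -> Cx) :
  ex_series (fun n => Cnorm (f n)) -> is_series (fun n => snd (f n)) (snd (Cx_Series f)).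
Proof.
  intros Hf; apply Series_correct, ex_series_Rabs.
  exact (ex_series_Rabs_of_Cnorm snd f Rabs_snd_le_Cnorm Hf).
Qed.

Lemma Cseries_Cx_Series (f : nat -> Cx) :
  ex_series (fun n => Cnorm (f n)) -> Cseries f (Cx_Series f).
Proof.
  intros Hf; apply Cseries_of_components.
  - exact (is_series_fst_Cx_Series f Hf).
  - exact (is_series_snd_Cx_Series f Hf).
Qed.

Lemma Cseries_cauchy_product (a b c : nat -> Cx) :
  ex_series (fun n => Cnorm (a n)) -> ex_series (fun n => Cnorm (b n)) ->
  (forall n, c n = Csum (fun k => Cmul (a k) (b (n - k)%nat)) (S n)) ->
  Cseries c (Cmul (Cx_Series a) (Cx_Series b)).
Proof.
  intros Ha Hb Hc.
  pose proof (is_series_fst_Cx_Series a Ha) as Ha1.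
  pose proof (is_series_snd_Cx_Series a Ha) as Ha2.
  pose proof (is_series_fst_Cx_Series b Hb) as Hb1.
  pose proof (is_series_snd_Cx_Series b Hb) as Hb2.
  pose proof (ex_series_Rabs_of_Cnorm fst a Rabs_fst_le_Cnorm Ha) as Ha1'.
  pose proof (ex_series_Rabs_of_Cnorm snd a Rabs_snd_le_Cnorm Ha) as Ha2'.
  pose proof (ex_series_Rabs_of_Cnorm fst b Rabs_fst_le_Cnorm Hb) as Hb1'.
  pose proof (ex_series_Rabs_of_Cnorm snd b Rabs_snd_le_Cnorm Hb) as Hb2'.
  apply Cseries_of_components.
  - pose proof (is_series_minus _ _ _ _ (is_series_mult _ _ _ _ Ha1 Hb1 Ha1' Hb1')
                                        (is_series_mult _ _ _ _ Ha2 Hb2 Ha2' Hb2')) as H.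
    eapply is_series_ext; [|exact H].
    intro n; rewrite Hc, Csum_fst; symmetry; apply minus_sum.
  - pose proof (is_series_plus _ _ _ _ (is_series_mult _ _ _ _ Ha1 Hb2 Ha1' Hb2')
                                       (is_series_mult _ _ _ _ Ha2 Hb1 Ha2' Hb1')) as H.
    eapply is_series_ext; [|exact H].
    intro n; rewrite Hc, Csum_snd; symmetry; apply plus_sum.
Qed.

Lemma ex_series_Cnorm_scal_pow (c : nat -> R) (w : Cx) :
  CV_disk c (Cnorm w) -> ex_series (fun n => Cnorm (Cscal (c n) (Cpow w n))).
Proof.
  apply ex_series_ext; intro n.
  rewrite Cnorm_scal, Cnorm_pow, Rabs_mult, <- RPow_abs.
  rewrite (Rabs_right (Cnorm w)) by apply Rle_ge, Cnorm_ge_0.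
  reflexivity.
Qed.

Lemma qint_S_l (q : R) (n : nat) : qint q (S n) = 1 + q * qint q n.
Proof.
  induction n as [|n IH]; [simpl; ring|].
  change (qint q (S (S n))) with (qint q (S n) + q ^ S n).
  rewrite IH at 1; simpl; ring.
Qed.

Lemma triangular_succ (n : nat) : (S n * (S n - 1) / 2 = n * (n - 1) / 2 + n)%nat.
Proof.
  replace (S n * (S n - 1))%nat with (n * (n - 1) + n * 2)%nat by (destruct n; simpl; lia).
  apply Nat.div_add; lia.
Qed.

Definition qint_inv_lim (q : R) : R := if Rlt_dec q 1 then 1 - q else 0.

Definition cauchy_coef (q : R) (n k : nat) : R :=
  q ^ (k * (k - 1) / 2) / qfact q k * / qfact q (n - k).

Section QNumbers.

Variable q : R.
Hypothesis q_gt0 : 0 < q.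

Lemma qint_S_ge1 (n : nat) : 1 <= qint q (S n).
Proof.
  induction n as [|n IH]; [simpl; lra|].
  change (qint q (S (S n))) with (qint q (S n) + q ^ S n).
  pose proof (pow_lt q (S n) q_gt0); lra.
Qed.

Lemma qfact_gt0 (n : nat) : 0 < qfact q n.
Proof.
  induction n as [|n IH]; [simpl; lra|].
  change (qfact q (S n)) with (qfact q n * qint q (S n)).
  pose proof (qint_S_ge1 n); nra.
Qed.

Lemma qint_mul_1_sub (n : nat) : qint q n * (1 - q) = 1 - q ^ n.
Proof. induction n as [|n IH]; simpl; [ring|]. rewrite Rmult_plus_distr_r, IH; ring. Qed.

Lemma qint_add (m n : nat) : qint q (m + n) = qint q m + q ^ m * qint q n.
Proof.
  induction n as [|n IH]; simpl.
  - rewrite Nat.add_0_r; ring.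
  - rewrite Nat.add_succ_r; simpl; rewrite IH, pow_add; ring.
Qed.

Lemma qint_ge_INR (q_ge1 : 1 <= q) (n : nat) : INR n <= qint q n.
Proof.
  induction n as [|n IH]; [simpl; lra|].
  change (qint q (S n)) with (qint q n + q ^ n).
  rewrite S_INR; pose proof (pow_R1_Rle q n q_ge1); lra.
Qed.

Lemma qint_inv (n : nat) : qint q (S n) = q ^ n * qint (/ q) (S n).
Proof.
  induction n as [|n IH]; [simpl; ring|].
  change (qint q (S (S n))) with (qint q (S n) + q ^ S n).
  rewrite IH, (qint_S_l (/ q) (S n)); simpl; field; lra.
Qed.

Lemma qfact_inv (n : nat) :
  qfact q n = q ^ (n * (n - 1) / 2) * qfact (/ q) n.
Proof.
  induction n as [|n IH]; [simpl; ring|].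
  change (qfact q (S n)) with (qfact q n * qint q (S n)).
  change (qfact (/ q) (S n)) with (qfact (/ q) n * qint (/ q) (S n)).
  rewrite IH, qint_inv, triangular_succ, pow_add; ring.
Qed.

Lemma is_lim_seq_inv_qint :
  is_lim_seq (fun n => / qint q (S n)) (qint_inv_lim q).
Proof.
  unfold qint_inv_lim; destruct (Rlt_dec q 1) as [q_lt1|q_ge1].
  - assert (Hpow : is_lim_seq (fun n => 1 - q ^ S n) (1 - 0)).
    { apply is_lim_seq_minus'; [apply is_lim_seq_const|].
      apply (is_lim_seq_incr_1 (fun n => q ^ n)), is_lim_seq_geom.
      rewrite Rabs_right; lra. }
    apply is_lim_seq_ext with (fun n => (1 - q) * / (1 - q ^ S n)).
    { intro n; pose proof (qint_mul_1_sub (S n)) as Hgeom.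
      pose proof (qint_S_ge1 n).
      rewrite <- Hgeom; field; lra. }
    replace (Finite (1 - q)) with (Rbar_mult (1 - q) (Rbar_inv (1 - 0)))
      by (simpl; f_equal; field).
    apply is_lim_seq_scal_l, is_lim_seq_inv; [exact Hpow|].
    intro H; injection H; lra.
  - change (Finite 0) with (Rbar_inv p_infty).
    apply is_lim_seq_inv; [|discriminate].
    apply is_lim_seq_le_p_loc with (fun n => INR (S n)).
    + exists O; intros n _; apply qint_ge_INR; lra.
    + apply (is_lim_seq_incr_1 INR), is_lim_seq_INR.
Qed.

Lemma qint_mul_cauchy_coef_sum (n : nat) :
  qint q (S n) * sum_f_R0 (cauchy_coef q (S n)) (S n)
  = (1 + q ^ n) * sum_f_R0 (cauchy_coef q n) n.
Proof.
  pose proof qfact_gt0 as Hfact.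
  (* Split the factor [[n+1] = [n+1-k] + q^(n+1-k) [k]] of the k-th term into [A k + B k]. *)
  set (A k := qint q (S n - k) * cauchy_coef q (S n) k).
  set (B k := q ^ (S n - k) * qint q k * cauchy_coef q (S n) k).
  assert (HA : sum_f_R0 A (S n) = sum_f_R0 (cauchy_coef q n) n).
  { rewrite tech5; unfold A at 2; rewrite Nat.sub_diag; simpl qint; rewrite Rmult_0_l, Rplus_0_r.
    apply sum_eq; intros k Hk; unfold A, cauchy_coef.
    replace (S n - k)%nat with (S (n - k)) by lia.
    change (qfact q (S (n - k))) with (qfact q (n - k) * qint q (S (n - k))).
    pose proof (Hfact k); pose proof (Hfact (n - k)%nat); pose proof (qint_S_ge1 (n - k)).
    field; lra. }
  assert (HB : sum_f_R0 B (S n) = q ^ n * sum_f_R0 (cauchy_coef q n) n).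
  { rewrite decomp_sum by lia; unfold B at 1; simpl qint; rewrite Rmult_0_r, Rmult_0_l, Rplus_0_l.
    rewrite scal_sum; apply sum_eq; intros k Hk; unfold B, cauchy_coef.
    replace (S n - S k)%nat with (n - k)%nat by lia.
    change (qfact q (S k)) with (qfact q k * qint q (S k)).
    rewrite triangular_succ, pow_add.
    replace (q ^ n) with (q ^ (n - k) * q ^ k) by (rewrite <- pow_add; f_equal; lia).
    pose proof (Hfact k); pose proof (Hfact (n - k)%nat); pose proof (qint_S_ge1 k).
    field; lra. }
  rewrite scal_sum, (sum_eq _ (fun k => A k + B k)), plus_sum, HA, HB; [ring|].
  intros k Hk; unfold A, B.
  rewrite <- Rmult_plus_distr_r, <- qint_add, Nat.sub_add by exact Hk; ring.
Qed.

Lemma cauchy_coef_sum_mul_qbfact (n : nat) :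
  sum_f_R0 (cauchy_coef q n) n * qbfact q n = 2 ^ n.
Proof.
  induction n as [|n IH]; [unfold cauchy_coef; simpl; field|].
  pose proof (qint_mul_cauchy_coef_sum n) as Hrec.
  pose proof (pow_lt q n q_gt0).
  change (qbfact q (S n)) with (qbfact q n * qbrace q (S n)).
  unfold qbrace; replace (S n - 1)%nat with n by lia.
  transitivity (qint q (S n) * sum_f_R0 (cauchy_coef q (S n)) (S n) * qbfact q n * 2 / (1 + q ^ n));
    [field; lra|].
  change (2 ^ S n) with (2 * 2 ^ n); rewrite Hrec, <- IH; field; lra.
Qed.

End QNumbers.

Lemma e_q_abs_summable (q : R) (w : Cx) : 0 < q -> Cnorm w * qint_inv_lim q < 1 ->
  ex_series (fun n => Cnorm (e_q_term q w n)).
Proof.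
  intros q_gt0 Hw; apply ex_series_Cnorm_scal_pow.
  apply CV_disk_DAlembert with (qint_inv_lim q).
  - intro n; apply Rinv_neq_0_compat, Rgt_not_eq, qfact_gt0, q_gt0.
  - apply is_lim_seq_ext with (fun n => / qint q (S n)); [|apply is_lim_seq_inv_qint, q_gt0].
    intro n; pose proof (qfact_gt0 q q_gt0 n); pose proof (qint_S_ge1 q q_gt0 n).
    replace (/ qfact q (S n) / / qfact q n) with (/ qint q (S n))
      by (change (qfact q (S n)) with (qfact q n * qint q (S n)); field; lra).
    symmetry; apply Rabs_right, Rle_ge, Rlt_le, Rinv_0_lt_compat; lra.
  - assert (0 <= qint_inv_lim q) by (unfold qint_inv_lim; destruct Rlt_dec; lra).
    destruct (Req_dec (qint_inv_lim q) 0) as [H0|H0]; [left; exact H0|right; split; [exact H0|]].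
    rewrite Rabs_right by apply Rle_ge, Cnorm_ge_0.
    apply (Rmult_lt_reg_r (qint_inv_lim q)); [lra|].
    rewrite Rinv_l by exact H0; exact Hw.
Qed.

Lemma E_q_term_inv (q : R) (w : Cx) (n : nat) : 0 < q -> E_q_term q w n = e_q_term (/ q) w n.
Proof.
  intros q_gt0; unfold E_q_term, e_q_term; f_equal.
  rewrite (qfact_inv q q_gt0 n).
  pose proof (pow_lt q (n * (n - 1) / 2) q_gt0).
  pose proof (qfact_gt0 (/ q) (Rinv_0_lt_compat q q_gt0) n).
  field; lra.
Qed.

Lemma Cauchy_product_E_q_e_q (q : R) (z : Cx) (n : nat) : 0 < q ->
  Csum (fun k => Cmul (E_q_term q (Cscal (/ 2) z) k) (e_q_term q (Cscal (/ 2) z) (n - k))) (S n)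
  = Eimp_term q z n.
Proof.
  intros q_gt0; set (w := Cscal (/ 2) z).
  transitivity (Csum (fun k => Cscal (cauchy_coef q n k) (Cpow w n)) (S n)).
  { apply Csum_ext; intros k Hk.
    unfold E_q_term, e_q_term, cauchy_coef.
    replace (Cpow w n) with (Cmul (Cpow w k) (Cpow w (n - k)))
      by (rewrite <- Cpow_add; f_equal; lia).
    Cx_ring. }
  rewrite Csum_scal; unfold Eimp_term, w; rewrite Cpow_scal.
  pose proof (cauchy_coef_sum_mul_qbfact q q_gt0 n) as Hsum.
  pose proof (pow_lt 2 n ltac:(lra)).
  assert (qbfact q n <> 0) by (intro H0; rewrite H0, Rmult_0_r in Hsum; lra).
  replace (sum_f_R0 (cauchy_coef q n) n) with (2 ^ n / qbfact q n) by (rewrite <- Hsum; field; auto).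
  rewrite pow_inv; apply Cx_eq; simpl; field; split; lra.
Qed.

Lemma in_disc_qint_inv_lim (q r : R) : 0 < q -> in_disc q r ->
  r / 2 * qint_inv_lim q < 1 /\ r / 2 * qint_inv_lim (/ q) < 1.
Proof.
  intros q_gt0; unfold in_disc, qint_inv_lim.
  destruct (Rlt_dec q 1) as [q_lt1|q_ge1]; intros Hr.
  - assert (1 < / q) by (rewrite <- Rinv_1; apply Rinv_lt_contravar; lra).
    destruct (Rlt_dec (/ q) 1); [lra|split; [|lra]].
    apply (Rmult_lt_compat_r (1 - q)) in Hr; [|lra].
    replace (2 / (1 - q) * (1 - q)) with 2 in Hr by (field; lra); lra.
  - destruct (Rlt_dec 1 q) as [q_gt1|q_le1].
    + assert (/ q < 1) by (rewrite <- Rinv_1; apply Rinv_lt_contravar; lra).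
      destruct (Rlt_dec (/ q) 1); [split; [lra|]|lra].
      apply (Rmult_lt_compat_r ((q - 1) / q)) in Hr; [|apply Rdiv_lt_0_compat; lra].
      replace (2 * q / (q - 1) * ((q - 1) / q)) with 2 in Hr by (field; lra).
      replace (1 - / q) with ((q - 1) / q) by (field; lra); lra.
    + replace q with 1 by lra; rewrite Rinv_1.
      destruct (Rlt_dec 1 1); lra.
Qed.

Theorem theorem1 (q : R) (hq : 0 < q) (z : Cx) (hz : in_disc q (Cnorm z)) :
  exists a b : Cx,
    Cseries (e_q_term q (Cscal (/ 2) z)) a /\
    Cseries (E_q_term q (Cscal (/ 2) z)) b /\
    Cseries (Eimp_term q z) (Cmul a b).
Proof.
  set (w := Cscal (/ 2) z).
  assert (Hw : Cnorm w = Cnorm z / 2)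
    by (unfold w; rewrite Cnorm_scal, Rabs_right by lra; field).
  destruct (in_disc_qint_inv_lim q (Cnorm z) hq hz) as [Hr_e Hr_E]; rewrite <- Hw in Hr_e, Hr_E.
  assert (He : ex_series (fun n => Cnorm (e_q_term q w n))) by exact (e_q_abs_summable q w hq Hr_e).
  assert (HE : ex_series (fun n => Cnorm (E_q_term q w n))).
  { apply ex_series_ext with (fun n => Cnorm (e_q_term (/ q) w n)).
    - intro n; rewrite E_q_term_inv by exact hq; reflexivity.
    - exact (e_q_abs_summable (/ q) w (Rinv_0_lt_compat q hq) Hr_E). }
  exists (Cx_Series (e_q_term q w)), (Cx_Series (E_q_term q w)).
  split; [|split]; [apply Cseries_Cx_Series; assumption ..|].
  replace (Cmul _ _) with (Cmul (Cx_Series (E_q_term q w)) (Cx_Series (e_q_term q w))) by Cx_ring.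
  apply Cseries_cauchy_product; [exact HE | exact He |].
  intro n; symmetry; exact (Cauchy_product_E_q_e_q q z n hq).
Qed.
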